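(* Let $C_1,C_2,\ell,r>0$ with $C_2\le C_1$, and let $T$ be a tree such that $\Delta(T)\le C_1$, all but $r$ vertices of $T$ have degree at most $C_2$, and $|V(T)|\ge \ell$. Then there exist disjoint vertex sets $A_1,\dots,A_s\subseteq V(T)$ such that: $V(T)=\bigcup_{i=1}^s A_i$; $T[A_i]$ is connected for each $1\le i\le s$; $\ell\le |A_i|\le C_1\ell$ for each $1\le i\le r$; and $\ell\le |A_i|\le C_2\ell$ for each $r<i\le s$.
   Context: $\Delta(T)$ denotes the maximum degree of $T$, and $T[A]$ denotes the subgraph of $T$ induced by $A$. *)

From mathcomp Require Import all_boot.
Set Implicit Arguments.
Unset Strict Implicit.
Unset Printing Implicit Defensive.

Definition simple_graph (T : finType) (e : rel T) : Prop :=
  symmetric e /\ irreflexive e.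

Definition deg (T : finType) (e : rel T) (x : T) : nat := #|[set y | e x y]|.

Definition connected_graph (T : finType) (e : rel T) : Prop :=
  forall x y : T, connect e x y.

Definition acyclic (T : finType) (e : rel T) : Prop :=
  forall p : seq T, uniq p -> 3 <= size p -> ~~ cycle e p.

Definition is_tree (T : finType) (e : rel T) : Prop :=
  simple_graph e /\ connected_graph e /\ acyclic e.

Definition induced (T : finType) (e : rel T) (A : {set T}) : rel T :=
  [rel u v | [&& e u v, u \in A & v \in A]].

Definition induced_connected (T : finType) (e : rel T) (A : {set T}) : Prop :=
  forall x y : T, x \in A -> y \in A -> connect (induced e A) x y.

From mathcomp Require Import all_boot.
From mathcomp Require Import zify.
Set Implicit Arguments.
Unset Strict Implicit.
Unset Printing Implicit Defensive.

(* Root a breadth-first spanning tree at any vertex, so that every other vertex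
   has a parent of smaller depth.  Among the vertices whose subtree has at least
   l vertices, a deepest one x has children whose subtrees all have fewer than
   l vertices, so the subtree of x has between l and 1 + d (l - 1) vertices,
   d < deg x being its number of children.  Cut it off and recurse; when fewer
   than l vertices would remain, keep them together with the subtree of x, which
   still gives at most 1 + deg x (l - 1) vertices.  Every part thus has at most
   C1 l vertices, and a part with more than C2 l vertices contains a vertex of
   degree more than C2; as the parts are disjoint, at most r parts are that
   large, and they are listed first. *)

Lemma fconnect_iterP (T : finType) (f : T -> T) x y :
  reflect (exists n, iter n f x = y) (fconnect f x y).
Proof.
apply: (iffP idP) => [xy|[n <-]]; last exact: fconnect_iter.
by exists (findex f x y); apply: iter_findex.
Qed.

Lemma partition_set1 (T : finType) (A : {set T}) : A != set0 -> partition [set A] A.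
Proof. by move=> A0; rewrite /partition cover1 trivIset1 inE eqxx eq_sym A0. Qed.

Lemma leq_card_trivIset (T : finType) (P : {set {set T}}) (H : {set T}) :
  trivIset P -> {in P, forall A : {set T}, ~~ [disjoint A & H]} -> #|P| <= #|H|.
Proof.
move=> tiP meetH; apply: leq_trans (leq_imset_card (pblock P) H).
apply/subset_leq_card/subsetP => A PA.
have /set0Pn [x /setIP [Ax Hx]] : A :&: H != set0 by rewrite setI_eq0 meetH.
by apply/imsetP; exists x; rewrite // (def_pblock tiP PA Ax).
Qed.

Lemma enum_pred_first (X : finType) (x0 : X) (P : {set X}) (a : pred X) :
  exists2 L : seq X, perm_eq L (enum P)
    & forall i, #|[set x in P | a x]| <= i -> i < size L -> ~~ a (nth x0 L i).
Proof.
set L1 := [seq x <- enum P | a x]; set L2 := [seq x <- enum P | predC a x].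
exists (L1 ++ L2); first by apply/permPl; apply: perm_filterC.
have -> : #|[set x in P | a x]| = size L1.
  rewrite setIdE cardE (perm_size (enum_setI _ _)).
  by congr size; apply: eq_filter => x; rewrite inE.
move=> i le_i lt_i; rewrite nth_cat ltnNge le_i /=.
have : nth x0 L2 (i - size L1) \in L2.
  by apply: mem_nth; rewrite -(ltn_add2l (size L1)) subnKC -?size_cat.
by rewrite mem_filter => /andP [].
Qed.

Section BreadthFirstTree.
Variables (T : finType) (e : rel T) (rho : T).

Definition ball n : {set T} :=
  iter n (fun S => S :|: [set z | [exists w in S, e w z]]) [set rho].

Lemma ball_path n x q :
  x \in ball n -> path e x q -> last x q \in ball (n + size q).
Proof.
elim: q x n => [|z q IHq] x n xn /=; first by rewrite addn0.
case/andP=> exz zq; rewrite -addSnnS; apply: IHq zq.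
rewrite /ball iterS -/(ball n) !inE; apply/orP; right.
by apply/existsP; exists x; rewrite xn.
Qed.

Hypothesis rho_connect : forall y, connect e rho y.

Lemma exists_ball y : exists n, y \in ball n.
Proof.
have /connectP [q rq ->] := rho_connect y.
by exists (0 + size q); apply: ball_path; rewrite // /ball inE.
Qed.

Definition depth y := ex_minn (exists_ball y).

Lemma mem_ball_depth y : y \in ball (depth y).
Proof. by rewrite /depth; case: ex_minnP. Qed.

Lemma depth_min y n : y \in ball n -> depth y <= n.
Proof. by rewrite /depth; case: ex_minnP => m _; apply. Qed.

Lemma exists_parent y : y != rho -> exists w, (depth w < depth y) && e w y.
Proof.
move=> y_rho; have := mem_ball_depth y.
case Dy: (depth y) => [|d]; first by rewrite /ball inE (negbTE y_rho).
rewrite /ball iterS -/(ball d) !inE => /orP [yd|/existsP [w /andP [wd ewy]]].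
  by have := depth_min yd; rewrite Dy ltnn.
by exists w; rewrite ewy andbT ltnS depth_min.
Qed.

Definition parent y :=
  if [pick w | (depth w < depth y) && e w y] is Some w then w else rho.

Lemma parent_root : parent rho = rho.
Proof.
rewrite /parent; case: pickP => // w /andP [].
by rewrite (_ : depth rho = 0) //; apply/eqP; rewrite -leqn0 depth_min // /ball inE.
Qed.

Lemma parent_spec y : y != rho -> (depth (parent y) < depth y) && e (parent y) y.
Proof.
move=> y_rho; rewrite /parent; case: pickP => // none.
by have [w] := exists_parent y_rho; rewrite none.
Qed.

End BreadthFirstTree.

(* 1 + deg y (l - 1) bounds a vertex y together with deg y branches of fewer
   than l vertices each. *)
Definition admissible_part (T : finType) (e : rel T) (l : nat) (A : {set T}) :=
  [/\ induced_connected e A, l <= #|A|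
    & exists2 y, y \in A & #|A| <= 1 + deg e y * l.-1].

Lemma admissible_part_heavy (T : finType) (e : rel T) l C (A : {set T}) :
  0 < l -> 0 < C -> admissible_part e l A -> C * l < #|A| ->
  exists2 y, y \in A & C < deg e y.
Proof.
move=> l_gt0 C_gt0 [_ _ [y yA Ay]] CA; exists y => //; rewrite ltnNge.
apply: contraL CA => degC; rewrite -leqNgt (leq_trans Ay) //.
by rewrite -[in C * l](prednK l_gt0) mulnS leq_add // leq_mul2r degC orbT.
Qed.

Lemma admissible_part_card_le (T : finType) (e : rel T) l C (A : {set T}) :
  0 < l -> 0 < C -> (forall x, deg e x <= C) -> admissible_part e l A ->
  #|A| <= C * l.
Proof.
move=> l_gt0 C_gt0 deg_le_C A_adm; rewrite leqNgt; apply/negP.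
by case/(admissible_part_heavy l_gt0 C_gt0 A_adm) => y _; rewrite ltnNge deg_le_C.
Qed.

Lemma card_large_admissible_parts (T : finType) (e : rel T) l C (P : {set {set T}}) :
  0 < l -> 0 < C -> trivIset P -> {in P, forall A, admissible_part e l A} ->
  #|[set A in P | C * l < #|A|]| <= #|[set x | C < deg e x]|.
Proof.
move=> l_gt0 C_gt0 tiP admP; apply: leq_card_trivIset.
  by apply: trivIsetS tiP; apply/subsetP => A /setIdP [].
move=> A /setIdP [PA large_A].
have [y yA heavy_y] := admissible_part_heavy l_gt0 C_gt0 (admP A PA) large_A.
by rewrite -setI_eq0; apply/set0Pn; exists y; rewrite !inE yA.
Qed.

Section Subtrees.
Variables (T : finType) (e : rel T) (rho : T) (p : T -> T) (h : T -> nat).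
Hypotheses (e_sym : symmetric e) (p_root : p rho = rho).
Hypothesis e_parent : forall y, y != rho -> e (p y) y.
Hypothesis h_parent : forall y, y != rho -> h (p y) < h y.

Lemma fconnect_root y : fconnect p y rho.
Proof.
have [n] := ubnP (h y); elim: n y => // n IHn y lt_yn.
case: (eqVneq y rho) => [->|y_rho]; first exact: connect0.
apply: connect_trans (fconnect1 p y) (IHn _ _).
by apply: leq_trans (h_parent y_rho) _.
Qed.

Lemma fconnect_from_root x : fconnect p rho x -> x = rho.
Proof. by case/fconnect_iterP => n <-; elim: n => //= n ->. Qed.

Definition subtree (U : {set T}) x := [set y in U | fconnect p y x].

Definition children (U : {set T}) x := [set c in U | (p c == x) && (c != x)].

Lemma subtree_root U : subtree U rho = U.
Proof. by apply/setP => y; rewrite inE fconnect_root andbT. Qed.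

Lemma subtree_sub U x : subtree U x \subset U.
Proof. by apply/subsetP => y; rewrite inE => /andP []. Qed.

Lemma card_children U x : #|children U x| + (x != rho) <= deg e x.
Proof.
have sub : children U x \subset [set y | e x y].
  apply/subsetP => c; rewrite !inE => /and3P [_ /eqP <- cx].
  by apply: e_parent; apply: contraNneq cx => ->; rewrite p_root.
case: (eqVneq x rho) => [_|x_rho]; first by rewrite addn0 subset_leq_card.
rewrite /= addn1 /deg (cardsD1 (p x) [set y | e x y]) inE e_sym e_parent // add1n ltnS.
apply/subset_leq_card/subsetP => c cx; rewrite in_setD1 (subsetP sub _ cx) andbT.
apply: contraTneq cx => ->; rewrite inE; apply/and3P => -[_ /eqP ppx _].
case: (eqVneq (p x) rho) => [px_rho|px_rho].
  by move: ppx; rewrite px_rho p_root => /esym/eqP; rewrite (negbTE x_rho).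
by have := h_parent px_rho; rewrite ppx ltnNge ltnW // h_parent.
Qed.

Section ClosedSet.
Variable U : {set T}.
Hypothesis U_closed : {homo p : y / y \in U}.

Lemma connect_subtree x y :
  y \in subtree U x -> connect (induced e (subtree U x)) y x.
Proof.
rewrite inE => /andP [yU /fconnect_iterP [n]].
elim: n y yU => [|n IHn] y yU; first by move=> /= ->.
rewrite iterSr => yx.
have pyD : p y \in subtree U x.
  by rewrite inE U_closed //=; apply/fconnect_iterP; exists n.
apply: connect_trans (IHn _ (U_closed yU) yx).
case: (eqVneq y rho) => [->|y_rho]; first by rewrite p_root.
apply: connect1; rewrite /induced /= e_sym e_parent // pyD andbT inE yU /=.
by apply/fconnect_iterP; exists n.+1; rewrite iterSr.
Qed.

Lemma subtree_connected x : induced_connected e (subtree U x).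
Proof.
move=> y z yD zD.
have sym : symmetric (induced e (subtree U x)).
  by move=> u v; rewrite /induced /= e_sym (andbC (u \in _)).
apply: connect_trans (connect_subtree yD) _.
by rewrite (sym_connect_sym sym); apply: connect_subtree.
Qed.

Lemma subtree_children x :
  subtree U x \subset x |: \bigcup_(c in children U x) subtree U c.
Proof.
apply/subsetP => y; rewrite inE => /andP [yU /fconnect_iterP [n]].
elim: n y yU => [|n IHn] y yU; first by move=> /= ->; rewrite setU11.
rewrite iterSr => yx; rewrite in_setU1.
case: (eqVneq y x) => //= y_x; apply/bigcupP.
have := IHn _ (U_closed yU) yx; rewrite in_setU1 => /predU1P [pyx|].
  by exists y; rewrite !inE ?yU ?pyx ?eqxx ?y_x ?connect0.
case/bigcupP => c cx; rewrite inE => /andP [_ pyc]; exists c => //.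
by rewrite inE yU (connect_trans (fconnect1 p y) pyc).
Qed.

Lemma closed_setD_subtree x : {homo p : y / y \in U :\: subtree U x}.
Proof.
move=> y; rewrite !in_setD !inE => /andP [yD yU]; rewrite U_closed // andbT.
by apply: contra yD => /andP [_ pyx]; rewrite yU (connect_trans (fconnect1 p y) pyx).
Qed.

Lemma card_subtree_light x l :
    (forall c, c \in children U x -> #|subtree U c| < l) ->
  #|subtree U x| <= 1 + #|children U x| * l.-1.
Proof.
move=> light; apply: leq_trans (subset_leq_card (subtree_children x)) _.
rewrite cardsU1 leq_add ?leq_b1 // -cover_imset.
apply: leq_trans (leq_card_cover _) _.
apply: (@leq_trans (\sum_(A in subtree U @: children U x) l.-1)).
  by apply: leq_sum => _ /imsetP [c cx ->]; have := light c cx; lia.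
by rewrite sum_nat_const leq_mul2r leq_imset_card orbT.
Qed.

End ClosedSet.

Section Partition.
Variable l : nat.
Hypothesis l_gt0 : 0 < l.

Lemma exists_deepest_large_subtree (U : {set T}) : rho \in U -> l <= #|U| ->
  exists x, [/\ x \in U, l <= #|subtree U x|
               & forall c, c \in children U x -> #|subtree U c| < l].
Proof.
move=> rhoU lU; pose large := [pred x | (x \in U) && (l <= #|subtree U x|)].
have large_rho : large rho by rewrite /= rhoU subtree_root.
have [x /andP [xU lx] deepest] := arg_maxnP h large_rho.
exists x; split => // c; rewrite inE ltnNge => /and3P [cU /eqP pc cx].
apply: contra cx => lc; have := deepest c; rewrite /= cU lc => /(_ isT).
case: (eqVneq c rho) => [c_rho|c_rho]; first by rewrite -pc c_rho p_root.
by have := h_parent c_rho; rewrite pc => /leq_trans/[apply]; rewrite ltnn.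
Qed.

Lemma admissible_closed_set (U : {set T}) y :
  {homo p : z / z \in U} -> y \in U -> l <= #|U| -> #|U| <= 1 + deg e y * l.-1 ->
  admissible_part e l U.
Proof.
move=> U_closed yU lU Uy; split=> //; last by exists y.
by rewrite -(subtree_root U); apply: subtree_connected.
Qed.

Lemma closed_admissible_partition (U : {set T}) :
  rho \in U -> {homo p : y / y \in U} -> l <= #|U| ->
  exists P, partition P U /\ {in P, forall A, admissible_part e l A}.
Proof.
have [n] := ubnP #|U|; elim: n U => // n IHn U ltUn rhoU U_closed lU.
have [x [xU lDx light]] := exists_deepest_large_subtree rhoU lU.
have le_Dx := card_subtree_light U_closed light.
have le_chx := card_children U x.
have U_single : #|U| <= 1 + deg e x * l.-1 ->
    exists P, partition P U /\ {in P, forall A, admissible_part e l A}.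
  move=> Ux; exists [set U]; split.
    by apply: partition_set1; rewrite -card_gt0 (leq_trans l_gt0).
  by move=> A; rewrite inE => /eqP ->; apply: admissible_closed_set xU lU Ux.
case: (eqVneq x rho) => [x_rho|x_rho].
  apply: U_single; rewrite -{1}(subtree_root U) -x_rho (leq_trans le_Dx) //.
  by rewrite leq_add2l leq_mul2r (leq_trans (leq_addr _ _) le_chx) orbT.
have lt_chx : #|children U x| < deg e x by move: le_chx; rewrite x_rho addn1.
set D := subtree U x in lDx le_Dx *; set U' := U :\: D.
have D_sub : D \subset U := subtree_sub U x.
have cardU : #|U| = #|D| + #|U'| by rewrite -(cardsID D U) (setIidPr D_sub).
case: (leqP l #|U'|) => [lU'|ltU'l]; last first.
  apply: U_single; rewrite cardU.
  have : #|children U x|.+1 * l.-1 <= deg e x * l.-1 by rewrite leq_mul2r lt_chx orbT.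
  rewrite mulSn; lia.
have rhoU' : rho \in U'.
  rewrite in_setD rhoU inE rhoU andbT /=.
  by apply: contra x_rho => /fconnect_from_root/eqP.
have [|P [partP admP]] := IHn U' _ rhoU' (closed_setD_subtree (x := x) U_closed) lU'.
  by move: ltUn; rewrite cardU; lia.
have D_adm : admissible_part e l D.
  split=> //; first exact: subtree_connected.
  exists x; first by rewrite inE xU connect0.
  by rewrite (leq_trans le_Dx) // leq_add2l leq_mul2r ltnW ?orbT.
exists (D |: P); split.
  rewrite -[X in partition _ X](setID U D) (setIidPr D_sub).
  apply: partitionU1 => //; first by rewrite -card_gt0 (leq_trans l_gt0).
  by rewrite disjoints_subset setCD subsetUr.
by move=> A; rewrite in_setU1 => /predU1P [->|/admP].
Qed.

End Partition.
End Subtrees.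

Lemma connected_admissible_partition (T : finType) (e : rel T) l :
  symmetric e -> connected_graph e -> 0 < l -> l <= #|T| ->
  exists P, partition P [set: T] /\ {in P, forall A, admissible_part e l A}.
Proof.
move=> e_sym e_conn l_gt0 lT; have /card_gt0P [rho _] := leq_trans l_gt0 lT.
have parentP y (y_rho : y != rho) := andP (parent_spec (e_conn rho) y_rho).
apply: (closed_admissible_partition (h := depth (e_conn rho)) e_sym
          (parent_root (e_conn rho))) => //.
- by move=> y /parentP [].
- by move=> y /parentP [].
- by rewrite cardsT.
Qed.

Theorem lemma2p1 (C1 C2 l r : nat) (T : finType) (e : rel T) :
  0 < C1 -> 0 < C2 -> 0 < l -> 0 < r -> C2 <= C1 ->
  is_tree e ->
  (forall x : T, deg e x <= C1) ->
  #|[set x : T | C2 < deg e x]| <= r ->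
  l <= #|T| ->
  exists (s : nat) (A : nat -> {set T}),
    [/\ (forall i j, i < s -> j < s -> i != j -> [disjoint A i & A j]),
        \bigcup_(i < s) A i = [set: T],
        (forall i, i < s -> induced_connected e (A i)),
        (forall i, i < s -> i < r -> l <= #|A i| <= C1 * l)
      & (forall i, i < s -> r <= i -> l <= #|A i| <= C2 * l)].
Proof.
move=> C1_gt0 C2_gt0 l_gt0 _ _ [[e_sym _] [e_conn _]] deg_le_C1 few_heavy lT.
have [P [partP admP]] := connected_admissible_partition e_sym e_conn l_gt0 lT.
have tiP := partition_trivIset partP; have /trivIsetP disjP := tiP.
have few_large : #|[set A in P | C2 * l < #|A|]| <= r.
  exact: leq_trans (card_large_admissible_parts l_gt0 C2_gt0 tiP admP) few_heavy.
have [L permL tail_small] := enum_pred_first set0 P (fun A => C2 * l < #|A|).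
have memL i : i < size L -> nth set0 L i \in P.
  by move=> iL; rewrite -mem_enum -(perm_mem permL) mem_nth.
have bounds A : A \in P -> l <= #|A| <= C1 * l.
  by move=> PA; have [_ -> _] := admP A PA; apply: admissible_part_card_le (admP A PA).
exists (size L), (nth set0 L); split.
- move=> i j iL jL ij; apply: disjP; rewrite ?memL //.
  by rewrite nth_uniq // (perm_uniq permL) enum_uniq.
- rewrite -(big_mkord xpredT (nth set0 L)) -(big_nth set0 xpredT id).
  by rewrite (perm_big _ permL) big_enum; apply: cover_partition partP.
- by move=> i /memL /admP [].
- by move=> i /memL /bounds.
- move=> i iL ri; have /andP [-> _] := bounds _ (memL i iL).
  by rewrite leqNgt tail_small // (leq_trans few_large).
Qed.
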